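(* Let $n\ge 1$ be an integer and $q\in\mathbb{C}$. The discriminant in $x$ of $K_n(x,q)=(1+x)^{2n}+qx^{n}$ is \[ \Delta_x\big(K_n(x,q)\big)=n^{2n}q^{2n-1}\,(q+2^{2n}). \]
   Context: For a polynomial $P(x)$ of degree $d$ with leading coefficient $a_d$ and roots $x_1,\dots,x_d$ (with multiplicity), its discriminant is $\Delta_x P=a_d^{2d-2}\prod_{1\le i<j\le d}(x_i-x_j)^2$. Here $K_n(x,q)$ is regarded as a monic polynomial of degree $2n$ in $x$. *)

From HB Require Import structures.
From mathcomp Require Import all_boot all_order all_algebra.
Set Implicit Arguments. Unset Strict Implicit. Unset Printing Implicit Defensive.
Import Order.TTheory GRing.Theory Num.Theory.
Local Open Scope ring_scope.

(* Discriminant of a monic polynomial given its list of roots with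
   multiplicity: prod_{i<j} (x_i - x_j)^2  (leading coefficient 1). *)
Definition disc_roots (R : comRingType) (rs : seq R) : R :=
  \prod_(i < size rs) \prod_(j < size rs | (i < j)%N) (rs`_i - rs`_j) ^+ 2.

Definition Kpoly (R : comRingType) (n : nat) (q : R) : {poly R} :=
  (1 + 'X) ^+ (2 * n) + q *: 'X^n.

From HB Require Import structures.
From mathcomp Require Import all_boot all_order all_algebra.
From mathcomp Require Import ring zify.

Set Implicit Arguments.
Unset Strict Implicit.
Unset Printing Implicit Defensive.
Import Order.TTheory GRing.Theory Num.Theory.
Local Open Scope ring_scope.

(* For a monic [P] with roots [r_1, ..., r_d], the product of the [P'(r_i)] is
   the discriminant up to the sign [(-1)^C(d,2)].  At a root [x] of [K := Kpoly n q]
   one has [x (1 + x) K'(x) = n q x^n (1 - x)], and multiplying over the [2n]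
   roots turns the products of the [x], [1 + x] and [1 - x] into the values
   [K(0) = 1], [K(-1) = (-1)^n q] and [K(1) = 2^(2n) + q].  This determines
   [q * disc]; for [q = 0] the root [-1] is multiple and both sides vanish. *)

Lemma prodr_const_ltn_pairs (R : comPzSemiRingType) (d : nat) (c : R) :
  \prod_(i < d) \prod_(j < d | (i < j)%N) c = c ^+ 'C(d, 2).
Proof.
rewrite (exchange_big_dep xpredT) //=.
under eq_bigr => j _.
  rewrite (big_ord_narrow (ltnW (ltn_ord j))) prodr_const card_ord.
over.
by rewrite prodrXr -(big_mkord xpredT (fun j => j)) bin2_sum.
Qed.

Lemma prod_neq_pairs (R : comPzSemiRingType) (d : nat) (F : 'I_d -> 'I_d -> R) :
  \prod_(i < d) \prod_(j < d | j != i) F i j =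
  \prod_(i < d) \prod_(j < d | (i < j)%N) (F i j * F j i).
Proof.
have split_neq i : \prod_(j < d | j != i) F i j =
    \prod_(j < d | (i < j)%N) F i j * \prod_(j < d | (j < i)%N) F i j.
  rewrite (bigID (fun j : 'I_d => (i < j)%N)) /=; congr (_ * _);
    apply: eq_bigl => j; rewrite -val_eqE /=; case: ltngtP => //.
rewrite (eq_bigr _ (fun i _ => split_neq i)) big_split /=.
rewrite [X in _ * X](exchange_big_dep xpredT) //=.
by rewrite -big_split; apply: eq_bigr => i _; rewrite big_split.
Qed.

Lemma prod_neq_subr_disc_roots (R : comNzRingType) (rs : seq R) :
  \prod_(i < size rs) \prod_(j < size rs | j != i) (rs`_i - rs`_j) =
  (-1) ^+ 'C(size rs, 2) * disc_roots rs.
Proof.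
rewrite prod_neq_pairs -prodr_const_ltn_pairs -big_split /=.
by apply: eq_bigr => i _; rewrite -big_split; apply: eq_bigr => j _ /=; ring.
Qed.

Lemma deriv_prod_XsubC_nth (R : comNzRingType) (rs : seq R) (i : 'I_(size rs)) :
  (\prod_(r <- rs) ('X - r%:P))^`().[rs`_i] =
  \prod_(j < size rs | j != i) (rs`_i - rs`_j).
Proof.
rewrite (big_nth 0) big_mkord (bigD1 i) //= derivM derivXsubC mul1r hornerD.
rewrite hornerM hornerXsubC subrr mul0r addr0 horner_prod.
by apply: eq_bigr => j _; rewrite hornerXsubC.
Qed.

Lemma prod_deriv_prod_XsubC (R : comNzRingType) (rs : seq R) :
  \prod_(r <- rs) (\prod_(s <- rs) ('X - s%:P))^`().[r] =
  (-1) ^+ 'C(size rs, 2) * disc_roots rs.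
Proof.
rewrite -prod_neq_subr_disc_roots (big_nth 0) big_mkord.
by apply: eq_bigr => i _; rewrite deriv_prod_XsubC_nth.
Qed.

Lemma disc_roots_eq0 (R : idomainType) (rs : seq R) (r : R) : r \in rs ->
  (\prod_(s <- rs) ('X - s%:P))^`().[r] = 0 -> disc_roots rs = 0.
Proof.
move=> rs_r P'r0; have /eqP := prod_deriv_prod_XsubC rs.
rewrite (big_rem r) //= P'r0 mul0r eq_sym mulf_eq0 signr_eq0 /=.
by move/eqP.
Qed.

Lemma horner_prod_XsubC (R : comNzRingType) (rs : seq R) (c : R) :
  (\prod_(r <- rs) ('X - r%:P)).[c] = (-1) ^+ size rs * \prod_(r <- rs) (r - c).
Proof.
elim: rs => [|r rs IH]; first by rewrite !big_nil hornerC mulr1.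
by rewrite !big_cons hornerM hornerXsubC IH exprS -opprB; ring.
Qed.

Lemma size_Kpoly (R : comNzRingType) (n : nat) (q : R) : (0 < n)%N ->
  size (Kpoly n q) = (2 * n).+1.
Proof.
move=> n_gt0; rewrite /Kpoly; have -> : 1 + 'X = 'X - (-1)%:P :> {poly R}.
  by rewrite polyCN opprK addrC.
rewrite size_polyDl size_exp_XsubC //.
apply: leq_ltn_trans (size_scale_leq _ _) _.
by rewrite size_polyXn ltnS ltn_Pmull.
Qed.

Lemma deriv_Kpoly (R : comNzRingType) (n : nat) (q : R) :
  (Kpoly n q)^`() = (1 + 'X) ^+ (2 * n).-1 *+ (2 * n) + q *: ('X^(n.-1) *+ n).
Proof.
by rewrite /Kpoly derivD deriv_exp derivZ derivXn derivD derivC derivX add0r mul1r.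
Qed.

(* [x (1 + x) K'(x) - n q x^n (1 - x) = 2n x K(x)] *)
Lemma Kpoly_root_deriv (R : comNzRingType) (n : nat) (q x : R) :
  root (Kpoly n q) x ->
  x * (1 + x) * (Kpoly n q)^`().[x] = n%:R * q * x ^+ n * (1 - x).
Proof.
rewrite deriv_Kpoly /root /Kpoly !(hornerE, hornerMn) => /eqP Kx0.
case: n Kx0 => [|m]; first by rewrite !mulr0n mulr0 addr0 !mul0r mulr0.
rewrite (_ : (2 * m.+1 = (2 * m).+2)%N) ?mulnS // => Kx0.
apply/eqP; rewrite -subr_eq0 -(mulr0 ((2 * m).+2%:R * x)) -Kx0; apply/eqP.
rewrite -[_ *+ (2 * m).+2]mulr_natr -[_ *+ m.+1]mulr_natr /= !exprS; ring.
Qed.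

Lemma horner_Kpoly (R : comNzRingType) (n : nat) (q x : R) :
  (Kpoly n q).[x] = (1 + x) ^+ (2 * n) + q * x ^+ n.
Proof. by rewrite /Kpoly !hornerE. Qed.

Lemma Kpoly0_root_deriv (R : idomainType) (n : nat) (x : R) : (0 < n)%N ->
  root (Kpoly n 0) x -> (Kpoly n 0)^`().[x] = 0.
Proof.
move=> n_gt0; rewrite deriv_Kpoly /root /Kpoly !scale0r !addr0 !(hornerE, hornerMn).
rewrite expf_eq0 => /andP[_ /eqP ->]; rewrite expr0n.
by case: n n_gt0 => // m _; rewrite mulnS add2n /= mul0rn.
Qed.

Lemma signr_bin2_double (R : pzRingType) (n : nat) :
  (-1) ^+ 'C(2 * n, 2) = (-1) ^+ n :> R.
Proof.
rewrite bin2 -mulnA !mul2n doubleK -signr_odd oddM.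
by case: n => [|m] //; rewrite doubleS /= odd_double andbT -[RHS]signr_odd.
Qed.

Section KpolySplit.

Variables (R : idomainType) (n : nat) (q : R) (rs : seq R).
Hypotheses (n_gt0 : (0 < n)%N) (K_split : Kpoly n q = \prod_(r <- rs) ('X - r%:P)).

Lemma size_Kpoly_roots : size rs = (2 * n)%N.
Proof.
by have := size_prod_XsubC rs id; rewrite -K_split size_Kpoly // => -[].
Qed.

Lemma root_Kpoly_roots r : r \in rs -> root (Kpoly n q) r.
Proof. by rewrite K_split root_prod_XsubC. Qed.

Lemma prod_Kpoly_roots_subr c : \prod_(r <- rs) (r - c) = (Kpoly n q).[c].
Proof.
by rewrite K_split horner_prod_XsubC size_Kpoly_roots exprM sqrrN !expr1n mul1r.
Qed.

Lemma prod_Kpoly_roots_subl c : \prod_(r <- rs) (c - r) = (Kpoly n q).[c].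
Proof.
by rewrite K_split horner_prod; apply: eq_bigr => r _; rewrite hornerXsubC.
Qed.

Lemma prod_Kpoly_roots_deriv :
  \prod_(r <- rs) (Kpoly n q)^`().[r] = (-1) ^+ n * disc_roots rs.
Proof.
by rewrite K_split prod_deriv_prod_XsubC size_Kpoly_roots signr_bin2_double.
Qed.

Lemma disc_Kpoly0_roots : q = 0 -> disc_roots rs = 0.
Proof.
move=> q0; have rs0 : rs`_0 \in rs by rewrite mem_nth // size_Kpoly_roots muln_gt0.
apply: (disc_roots_eq0 rs0); rewrite -K_split q0.
by apply: Kpoly0_root_deriv => //; have := root_Kpoly_roots rs0; rewrite q0.
Qed.

Lemma mul_disc_Kpoly_roots :
  q * disc_roots rs = n%:R ^+ (2 * n) * q ^+ (2 * n) * (2 ^+ (2 * n) + q).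
Proof.
have prod_roots : \prod_(r <- rs) r = 1.
  have := prod_Kpoly_roots_subr 0; under eq_bigr do rewrite subr0; move=> ->.
  by rewrite horner_Kpoly addr0 expr1n expr0n gtn_eqF // mulr0 addr0.
have prod_1addr : \prod_(r <- rs) (1 + r) = (-1) ^+ n * q.
  have := prod_Kpoly_roots_subr (-1); under eq_bigr do rewrite opprK addrC; move=> ->.
  by rewrite horner_Kpoly subrr expr0n gtn_eqF ?muln_gt0 // add0r mulrC.
have root_prod : \prod_(r <- rs) (r * (1 + r) * (Kpoly n q)^`().[r]) =
                 \prod_(r <- rs) (n%:R * q * r ^+ n * (1 - r)).
  by apply: eq_big_seq => r /root_Kpoly_roots /Kpoly_root_deriv.
move: root_prod; rewrite !big_split /= prodrXl prod_Kpoly_roots_deriv.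
rewrite prod_roots prod_1addr !big_const_seq count_predT !iter_mulr_1.
rewrite prod_Kpoly_roots_subl horner_Kpoly size_Kpoly_roots !expr1n !mulr1 addrC => eq_prod.
transitivity ((-1) ^+ n * ((-1) ^+ n * (q * disc_roots rs))).
  by rewrite signrMK.
transitivity ((-1) ^+ n * q * ((-1) ^+ n * disc_roots rs)); first by ring.
by rewrite -eq_prod mul1r.
Qed.

End KpolySplit.

Theorem proposition2p1 (C : numClosedFieldType) (n : nat) (q : C)
  (rs : seq C) :
  (1 <= n)%N ->
  Kpoly n q = \prod_(r <- rs) ('X - r%:P) ->
  disc_roots rs =
    (n%:R) ^+ (2 * n) * q ^+ (2 * n - 1) * (q + 2%:R ^+ (2 * n)).
Proof.
move=> n_gt0 K_split; have [q0 | q_neq0] := eqVneq q 0.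
  rewrite (disc_Kpoly0_roots n_gt0 K_split q0) q0 expr0n (_ : (2 * n - 1 == 0)%N = false).
    by rewrite mulr0 mul0r.
  by apply/negbTE; lia.
have q_pow : q ^+ (2 * n) = q * q ^+ (2 * n - 1).
  by rewrite -exprS subn1 prednK // muln_gt0.
by apply: (mulfI q_neq0); rewrite (mul_disc_Kpoly_roots n_gt0 K_split) q_pow addrC; ring.
Qed.
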